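(* Every triangulated two-dimensional sphere with at most $12$ triangles has a winning strategy for the coloring game.
   Context: Coloring game on a simplicial $2$-sphere $B$: (1) choose one or two vertices of $B$ and color them red; (2) choose an edge of $B$ both of whose endpoints are currently uncolored and which, together with some already red vertex, spans a triangle of $B$; color the edge and its two endpoints red and color that triangle green. Step (2) may be repeated as long as possible. $B$ has a winning strategy if some admissible sequence of moves produces at least $f(B)/4$ green triangles, where $f(B)$ is the number of triangles of $B$. *)

From mathcomp Require Import all_boot.
Set Implicit Arguments. Unset Strict Implicit. Unset Printing Implicit Defensive.

Section Complex.
Variable T : finType.
Variable F : {set {set T}}.   (* the triangles (facets) of B *)

Definition verts : {set T} := \bigcup_(t in F) t.

Definition edges : {set {set T}} :=
  [set e : {set T} | (#|e| == 2) && [exists t in F, e \subset t]].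

Definition adj : rel T := fun x y => (x != y) && ([set x; y] \in edges).

(* the link of a vertex v, as a graph on the neighbours of v *)
Definition link_rel (v : T) : rel T :=
  fun x y => [set v; x; y] \in F.
Definition link_verts (v : T) : {set T} :=
  [set x | (x != v) && ([set v; x] \in edges)].

(* Combinatorial triangulated 2-sphere: a pure 2-dimensional simplicial
   complex which is a closed connected combinatorial 2-manifold
   (every edge in exactly two triangles, every vertex link a single cycle)
   with Euler characteristic 2. *)
Definition is_sphere2 : Prop :=
  [/\ forall t, t \in F -> #|t| = 3,
      forall e, e \in edges -> #|[set t in F | e \subset t]| = 2,
      forall v, v \in verts ->
        forall x y, x \in link_verts v -> y \in link_verts v ->
          connect (link_rel v) x y,
      forall x y, x \in verts -> y \in verts -> connect adj x y
    & (#|verts| + #|F| = #|edges| + 2)%N].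

(* A move (a, b, c) colours the edge {a,b} and its
   endpoints red and the triangle {a,b,c} green; it is admissible when
   a, b are currently uncoloured, {a,b,c} is a triangle of B and c is red. *)
Fixpoint valid_moves (R : {set T}) (ms : seq (T * T * T)) : bool :=
  match ms with
  | [::] => true
  | (a, b, c) :: ms' =>
      [&& a \notin R, b \notin R, a != b, [set a; b; c] \in F, c \in R
        & valid_moves (a |: (b |: R)) ms']
  end.

Definition green_triangles (ms : seq (T * T * T)) : {set {set T}} :=
  [set [set m.1.1; m.1.2; m.2] | m in ms].

Definition has_winning_strategy : Prop :=
  exists (R0 : {set T}) (ms : seq (T * T * T)),
    [/\ R0 \subset verts, 1 <= #|R0| <= 2, valid_moves R0 ms
      & #|F| <= 4 * #|green_triangles ms|].

End Complex.

(* Double counting gives 3f = 2e, so Euler's formula reads f = 2v - 4: hence v <= 8,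
   and the average degree 6 - 12/v exceeds 3 when v >= 5 and exceeds 4 when v >= 7.
   With a single red vertex c, any 2k consecutive vertices of the link cycle of c pair
   up into k moves whose green triangles are spokes at c.  This settles f <= 4 (one
   move), f <= 8 (a vertex of degree >= 4) and f <= 12 with a vertex of degree >= 6.
   If instead deg c = 5 and v >= 7, some vertex a outside the closed star of c is
   adjacent to a link vertex b.  An apex of one of the two triangles on ab lies in the
   link of c, so it is red after the two spokes avoiding b, and (b, a, apex) is a third
   move: otherwise a and both apexes lie outside the star, and v >= 6 + 3. *)

From mathcomp Require Import all_boot zify.
Set Implicit Arguments. Unset Strict Implicit. Unset Printing Implicit Defensive.

Section FiniteSets.
Variable T : finType.

Lemma card_set3_uniq (a b c : T) : (#|[set a; b; c]| == 3) = uniq [:: a; b; c].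
Proof.
have -> : #|[set a; b; c]| = #|[:: a; b; c]| by apply: eq_card => z; rewrite !inE orbA.
exact/eqP/card_uniqP.
Qed.

Lemma set3C12 (a b c : T) : [set a; b; c] = [set b; a; c].
Proof. by rewrite [[set a; b]]setUC. Qed.

Lemma set3C23 (a b c : T) : [set a; b; c] = [set a; c; b].
Proof. by rewrite -!setUA [[set b] :|: _]setUC. Qed.

Lemma set3_rot (a b c : T) : [set a; b; c] = [set b; c; a].
Proof. by rewrite set3C12 set3C23. Qed.

Lemma uniq_size_le_card (A : {set T}) (s : seq T) :
  uniq s -> {subset s <= A} -> size s <= #|A|.
Proof. by move=> /card_uniqP <- /subsetP; apply: subset_leq_card. Qed.

Lemma connect_cross (e : rel T) (A : {pred T}) x y :
  connect e x y -> x \notin A -> y \in A -> exists a b, [/\ e a b, a \notin A & b \in A].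
Proof.
case/connectP => s; elim: s x => [|z s IHs] x /=; first by move=> _ -> /negP.
case/andP => xz zs ey xA yA; case: (boolP (z \in A)) => zA; first by exists x, z.
exact: IHs zs ey zA yA.
Qed.

Lemma double_count (U V : finType) (A : {set U}) (B : {set V}) (R : U -> V -> bool) :
  \sum_(x in A) #|[set y in B | R x y]| = \sum_(y in B) #|[set x in A | R x y]|.
Proof.
have card_sep (W : finType) (C : {set W}) (P : pred W) :
    #|[set w in C | P w]| = \sum_(w in C) P w.
  rewrite -sum1_card (eq_bigl (fun w => (w \in C) && P w)) => [|w]; last by rewrite inE.
  by rewrite big_mkcondr; apply: eq_bigr => w _; case: (P w).
under eq_bigr => x _ do rewrite card_sep.
by rewrite exchange_big; apply: eq_bigr => y _; rewrite card_sep.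
Qed.

End FiniteSets.

Section Game.
Variables (T : finType) (F : {set {set T}}).

Lemma valid_moves_fresh R ms m : valid_moves F R ms -> m \in ms -> m.1.1 \notin R.
Proof.
elim: ms R => //= [[[a b] c] ms IHms] R /and5P [aR _ _ _ /andP [_ val]].
rewrite inE => /predU1P [-> //|/(IHms _ val)].
by apply: contra => mR; rewrite !inE mR !orbT.
Qed.

Lemma card_green_triangles R ms :
  valid_moves F R ms -> #|green_triangles ms| = size ms.
Proof.
move=> val; pose tri (m : T * T * T) := [set m.1.1; m.1.2; m.2].
(* Each triangle contains a vertex that is still uncoloured when it turns green. *)
have uniq_tri : uniq (map tri ms).
  elim: ms R val => //= [[[a b] c] ms IHms] R /and5P [aR bR _ _ /andP [cR val]].
  rewrite (IHms _ val) andbT; apply/mapP => -[m mms tri_eq].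
  have := valid_moves_fresh val mms; rewrite !inE !negb_or => /and3P [ma mb mR].
  have : m.1.1 \in tri (a, b, c) by rewrite tri_eq !inE eqxx.
  by rewrite !inE (negbTE ma) (negbTE mb) => /eqP mc; rewrite mc cR in mR.
rewrite -(size_map tri) -(card_uniqP uniq_tri); apply: eq_card => t.
by apply/imsetP/mapP => -[m mms ->]; exists m.
Qed.

Lemma win_of_moves c ms : c \in verts F -> valid_moves F [set c] ms ->
  #|F| <= 4 * size ms -> has_winning_strategy F.
Proof.
move=> cV val le_F; exists [set c], ms.
by rewrite sub1set cards1 (card_green_triangles val).
Qed.

Fixpoint fan_moves (c : T) (p : seq T) (ms : seq (T * T * T)) :=
  if p is x :: y :: p' then (x, y, c) :: fan_moves c p' ms else ms.

Lemma size_fan_moves c p ms : size (fan_moves c p ms) = (size p)./2 + size ms.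
Proof.
have [n] := ubnP (size p); elim: n p => // n IHn [|x [|y p]] //= lt_n.
by rewrite IHn // ltnW.
Qed.

Lemma valid_fan_moves c (R : {set T}) p ms : c \in R -> ~~ odd (size p) ->
  sorted (link_rel F c) p -> uniq p -> [disjoint p & R] ->
  valid_moves F (R :|: [set x in p]) ms -> valid_moves F R (fan_moves c p ms).
Proof.
have [n] := ubnP (size p); elim: n => // n IHn in p R *.
case: p => [|x [|y p]] //= lt_n cR odd_p.
  by move=> _ _ _; rewrite set_nil setU0.
case/andP=> xy pth; rewrite !inE !negb_or => /and3P [/andP [xy' x_p] y_p Up].
rewrite !disjoint_cons => /and3P [xR yR dis] val.
rewrite xR yR xy' -set3_rot (xy : [set c; x; y] \in F) cR /=.
apply: IHn => //; first exact: ltnW.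
- by rewrite !inE cR !orbT.
- by rewrite negbK in odd_p.
- exact: path_sorted pth.
- move: dis; rewrite !disjoint_has => /hasPn dis; apply/hasPn => z zp.
  by rewrite !inE !negb_or (dis z zp) (memPn x_p z zp) (memPn y_p z zp).
- congr (valid_moves _ _ ms): val; apply/setP => z; rewrite !inE.
  by case: (z == x) (z == y) (z \in R) => [] [] [].
Qed.

End Game.

Section Surface.
Variables (T : finType) (F : {set {set T}}).
Hypothesis card_tri : forall t, t \in F -> #|t| = 3.
Hypothesis card_edge_tri :
  forall e, e \in edges F -> #|[set t in F | e \subset t]| = 2.

Lemma tri_uniq a b c : [set a; b; c] \in F -> uniq [:: a; b; c].
Proof. by move/card_tri/eqP; rewrite card_set3_uniq. Qed.

Lemma tri_neq a b c : [set a; b; c] \in F -> [/\ a != b, b != c & a != c].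
Proof. by move/tri_uniq; rewrite /= !inE negb_or andbT => /andP [/andP [-> ->] ->]. Qed.

Lemma tri_verts a b c :
  [set a; b; c] \in F -> [/\ a \in verts F, b \in verts F & c \in verts F].
Proof.
move=> tF; have /subsetP sub := bigcup_sup _ tF (F := id).
by split; apply: sub; rewrite !inE eqxx ?orbT.
Qed.

Lemma tri_edge a b c : [set a; b; c] \in F -> [set a; b] \in edges F.
Proof.
move=> tF; have [ab _ _] := tri_neq tF.
rewrite inE cards2 ab; apply/existsP; exists [set a; b; c].
by rewrite tF subsetUl.
Qed.

Lemma edge_verts e : e \in edges F -> e \subset verts F.
Proof.
rewrite inE => /andP [_ /existsP [t /andP [tF et]]].
exact: subset_trans et (bigcup_sup t tF).
Qed.

Lemma link_relC c x y : link_rel F c x y = link_rel F c y x.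
Proof. by rewrite /link_rel set3C23. Qed.

Lemma link_rel_link c x y : link_rel F c x y -> x \in link_verts F c.
Proof. by move=> tF; have [cx _ _] := tri_neq tF; rewrite inE eq_sym cx (tri_edge tF). Qed.

Lemma tri_of_edge t p q : t \in F -> p \in t -> q \in t -> p != q ->
  exists y, t = [set p; q; y].
Proof.
move=> tF pt qt pq.
have : ~~ (t \subset [set p; q]).
  by apply/negP => /subset_leq_card; rewrite cards2 pq card_tri.
case/subsetPn => y yt; rewrite !inE negb_or => /andP [py qy].
exists y; apply/eqP; rewrite eq_sym eqEcard card_tri // (eqP _ : #|_| = 3); last first.
  by rewrite card_set3_uniq /= !inE negb_or pq eq_sym py eq_sym qy.
rewrite leqnn andbT; apply/subsetP => z; rewrite !inE.
by case/orP => [/orP[]|] /eqP ->.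
Qed.

Lemma card_link_nbrs c x :
  x \in link_verts F c -> #|[set y | link_rel F c x y]| = 2.
Proof.
rewrite inE => /andP [xc /card_edge_tri <-].
have -> : [set t in F | [set c; x] \subset t] =
          [set [set c; x; y] | y in [set y | link_rel F c x y]].
  apply/setP => t; rewrite inE; apply/andP/imsetP => [[tF /subsetP ct]|[y]].
    have cx : c != x by rewrite eq_sym.
    have [y tE] := tri_of_edge tF (ct _ (set21 _ _)) (ct _ (set22 _ _)) cx.
    by exists y; rewrite // inE /link_rel -tE.
  by rewrite inE => tF ->; rewrite subsetUl.
rewrite card_in_imset // => y z; rewrite !inE => tF _ tE.
have [_ xy cy] := tri_neq tF.
have : y \in [set c; x; z] by rewrite -tE !inE eqxx orbT.
by rewrite !inE eq_sym (negbTE cy) eq_sym (negbTE xy) => /eqP.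
Qed.

Lemma link_nbr_exists c x : x \in link_verts F c -> exists y, link_rel F c x y.
Proof.
move/card_link_nbrs => N2.
have /card_gt0P [y] : 0 < #|[set y | link_rel F c x y]| by rewrite N2.
by rewrite inE; exists y.
Qed.

Lemma link_nbrs2 c x a :
  link_rel F c x a -> exists y z, y != z /\ [set y | link_rel F c x y] = [set y; z].
Proof. by move/link_rel_link/card_link_nbrs/eqP/cards2P. Qed.

Lemma link_nbr_other c x a : link_rel F c x a -> exists2 b, b != a & link_rel F c x b.
Proof.
move=> xa; have [y [z [yz N]]] := link_nbrs2 xa.
have inN b : link_rel F c x b = (b \in [set y; z]) by rewrite -N inE.
have := xa; rewrite inN !inE => /orP [] /eqP ->.
  by exists z; rewrite 1?eq_sym // inN !inE eqxx orbT.
by exists y; rewrite // inN !inE eqxx.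
Qed.

Lemma link_nbr_eq c x a b z : link_rel F c x a -> link_rel F c x b -> a != b ->
  link_rel F c x z -> (z == a) || (z == b).
Proof.
move=> xa xb ab xz; have [y [y' [yy' N]]] := link_nbrs2 xa.
have inN u : link_rel F c x u = (u \in [set y; y']) by rewrite -N inE.
move: xa xb xz ab; rewrite !inN !inE.
by do 3!case/orP=> /eqP->; rewrite ?eqxx ?orbT.
Qed.

Lemma three_faces_two_edges : 3 * #|F| = 2 * #|edges F|.
Proof.
have edges_of_tri t : t \in F -> #|[set e in edges F | e \subset t]| = 3.
  move=> tF; rewrite -[3]/'C(3, 2) -(card_tri tF) -cards_draws.
  apply: eq_card => e; rewrite !inE andbC; apply: andb_id2l => et.
  by apply: andb_idr => _; apply/existsP; exists t; rewrite tF.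
rewrite mulnC -sum_nat_const -(eq_bigr _ edges_of_tri) double_count mulnC.
by rewrite -sum_nat_const; apply: eq_bigr => e /card_edge_tri.
Qed.

Lemma card_edges_at_le_deg c : #|[set e in edges F | c \in e]| <= #|link_verts F c|.
Proof.
apply: leq_trans (leq_imset_card (fun x => [set c; x]) _).
apply/subset_leq_card/subsetP => e; rewrite inE => /andP [eE ce].
have e2 : #|e| = 2 by move: eE; rewrite inE => /andP [/eqP].
have /subsetPn [x xe] : ~~ (e \subset [set c]).
  by apply/negP => /subset_leq_card; rewrite e2 cards1.
rewrite inE => xc; have eE' : e = [set c; x].
  apply/eqP; rewrite eq_sym eqEcard e2 cards2 eq_sym xc leqnn andbT.
  by apply/subsetP => z; rewrite !inE => /orP [] /eqP ->.
by apply/imsetP; exists x; rewrite // inE xc -eE'.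
Qed.

Lemma two_edges_le_sum_deg : 2 * #|edges F| <= \sum_(c in verts F) #|link_verts F c|.
Proof.
have verts_of_edge e : e \in edges F -> #|[set c in verts F | c \in e]| = 2.
  move=> eE; move: (eE); rewrite inE => /andP [/eqP <- _].
  by apply: eq_card => c; rewrite inE andbC; apply: andb_idr => /(subsetP (edge_verts eE)).
rewrite mulnC -sum_nat_const -(eq_bigr _ verts_of_edge) -double_count.
by apply: leq_sum => c _; apply: card_edges_at_le_deg.
Qed.

Lemma exists_deg_gt k : k * #|verts F| < 2 * #|edges F| ->
  exists2 c, c \in verts F & k < #|link_verts F c|.
Proof.
move=> lt_k; apply/exists_inP; apply: contraLR lt_k.
rewrite negb_exists_in -leqNgt => /forall_inP le_k.
apply: leq_trans two_edges_le_sum_deg _; rewrite mulnC -sum_nat_const.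
by apply: leq_sum => c /le_k; rewrite -leqNgt.
Qed.

Hypothesis link_connected : forall v, v \in verts F ->
  forall x y, x \in link_verts F v -> y \in link_verts F v ->
    connect (link_rel F v) x y.

Lemma link_cycle_closed c s x y : uniq s -> 2 < size s ->
  cycle (link_rel F c) s -> x \in s -> link_rel F c x y -> y \in s.
Proof.
move=> Us s3 cyc_s /rot_to [i s' rot_s] xy; rewrite -(mem_rot i) rot_s.
rewrite -(rot_uniq i) rot_s in Us; rewrite -(size_rot i) rot_s in s3.
rewrite -(rot_cycle i) rot_s in cyc_s.
case: s' {rot_s} s3 Us cyc_s => [|b [|r1 r]] // _ /=.
move=> /and4P [_ b_r _ _] /and3P [xb _]; rewrite rcons_path => /andP [_ lx].
(* The two cycle neighbours of x are distinct, so they are all its link neighbours. *)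
have bl : b != last r1 r by apply: contraNneq b_r => ->; apply: mem_last.
rewrite link_relC in lx.
case/orP: (link_nbr_eq xb lx bl xy) => /eqP ->; first by rewrite !inE eqxx orbT.
by rewrite 2!inE mem_last !orbT.
Qed.

Lemma link_cycle_cover c s : c \in verts F -> uniq s -> 2 < size s ->
  cycle (link_rel F c) s -> #|link_verts F c| <= size s.
Proof.
move=> cV Us s3 cyc_s; rewrite -(card_uniqP Us); apply/subset_leq_card/subsetP => y yL.
case: s s3 Us cyc_s => // x s' s3 Us cyc_s.
have xs : x \in x :: s' := mem_head x s'.
have xL := link_rel_link (next_cycle cyc_s xs).
have closed_s : closed (link_rel F c) (mem (x :: s')).
  apply: intro_closed => [|u v uv us]; first exact/sym_connect_sym/link_relC.
  exact: link_cycle_closed Us s3 cyc_s us uv.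
by rewrite -(closed_connect closed_s (link_connected cV xL yL)).
Qed.

Lemma exists_link_path c x0 n : c \in verts F -> x0 \in link_verts F c ->
  n < #|link_verts F c| -> exists p, [/\ size p = n,
    sorted (link_rel F c) (rcons p x0), uniq (rcons p x0)
    & {subset rcons p x0 <= link_verts F c}].
Proof.
move=> cV x0L; elim: n => [|n IHn] lt_n.
  by exists [::]; split=> // x; rewrite mem_seq1 => /eqP ->.
have [p [sz srt Uq qL]] := IHn (ltnW lt_n).
have size_q : size (rcons p x0) = n.+1 by rewrite size_rcons sz.
case def_q : (rcons p x0) size_q srt Uq qL => [//|l q] size_q srt Uq qL.
suff [z zl z_q] : exists2 z, link_rel F c z l & z \notin l :: q.
  exists (z :: p); rewrite /= def_q sz z_q Uq; split=> // [|x]; first exact/andP.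
  by rewrite inE => /predU1P [->|/qL //]; apply: link_rel_link zl.
case: q => [|m q] in def_q size_q srt Uq qL *.
  have [z lz] := link_nbr_exists (qL l (mem_head _ _)); have [_ lz' _] := tri_neq lz.
  by exists z; rewrite 1?link_relC // mem_seq1 eq_sym.
move: srt => /= /andP [lm pth]; have [z zm lz] := link_nbr_other lm.
have [_ lz' _] := tri_neq lz; exists z; first by rewrite link_relC.
rewrite !inE eq_sym (negbTE lz') (negbTE zm) /=.
apply/negP => zq; move: pth Uq size_q; case/path.splitP: zq => p1 p2.
rewrite cat_path -2!cat_cons cat_uniq => /andP [pth _] /andP [Uq _].
rewrite /= size_cat size_rcons => size_q.
(* Otherwise z closes a cycle in the link that is shorter than the link. *)
have cyc : cycle (link_rel F c) [:: l, m & rcons p1 z].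
  by rewrite /= lm rcons_path pth last_rcons link_relC.
have := link_cycle_cover cV Uq _ cyc; rewrite /= size_rcons; lia.
Qed.

Lemma win_one_triangle t : t \in F -> #|F| <= 4 -> has_winning_strategy F.
Proof.
move=> tF le_F; have /card_gt1P [x [y [xt yt xy]]] : 1 < #|t| by rewrite card_tri.
have [z tE] := tri_of_edge tF xt yt xy; rewrite tE in tF.
have [_ yz xz] := tri_neq tF; have [_ _ zV] := tri_verts tF.
apply: (@win_of_moves _ _ z [:: (x, y, z)]) => //.
by rewrite /= !inE xz yz xy tF eqxx.
Qed.

Lemma win_fan c k : c \in verts F -> 2 * k <= #|link_verts F c| ->
  #|F| <= 4 * k -> has_winning_strategy F.
Proof.
move=> cV le_k le_F; case: k => [|k] in le_k le_F *.
  by apply: (@win_of_moves _ _ c [::]).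
have /card_gt0P [x0 x0L] : 0 < #|link_verts F c| by apply: leq_trans le_k.
have lt_k : k.*2.+1 < #|link_verts F c| by rewrite -muln2; lia.
have [p [sz srt Up pL]] := exists_link_path cV x0L lt_k.
apply: (@win_of_moves _ _ c (fan_moves c (rcons p x0) [::])) => //.
  apply: valid_fan_moves => //; first by rewrite set11.
    by rewrite size_rcons sz /= negbK odd_double.
  by rewrite disjoint_has; apply/hasPn => x /pL; rewrite !inE => /andP [].
by rewrite size_fan_moves size_rcons sz addn0 /= half_double.
Qed.

Lemma win_link5_apex c a b z : c \in verts F -> #|link_verts F c| = 5 ->
  b \in link_verts F c -> a \notin c |: link_verts F c -> link_rel F b a z ->
  z \in link_verts F c -> #|F| <= 12 -> has_winning_strategy F.
Proof.
move=> cV d5 bL aS baz zL le_F; have [ba _ bz] := tri_neq baz.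
have lt4 : 4 < #|link_verts F c| by rewrite d5.
have [p [sz srt Uq qL]] := exists_link_path cV bL lt4.
have srt_p : sorted (link_rel F c) p.
  by case: p srt {sz Uq qL} => //= x p; rewrite rcons_path => /andP [].
have z_p : z \in p.
  have : z \in rcons p b.
    apply: contraT => z_q; have := uniq_size_le_card (A := link_verts F c) (s := z :: rcons p b).
    rewrite /= z_q Uq size_rcons sz d5 => /(_ isT); apply=> // x.
    by rewrite inE => /predU1P [->|/qL].
  by rewrite mem_rcons inE eq_sym (negbTE bz).
have pL x : x \in p -> x \in link_verts F c.
  by move=> xp; apply: qL; rewrite mem_rcons inE xp orbT.
have linkN x : x \in link_verts F c -> x != c by rewrite inE => /andP [].
move: aS; rewrite in_setU1 negb_or => /andP [ac aL].
move: Uq; rewrite rcons_uniq => /andP [b_p Up].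
apply: (@win_of_moves _ _ c (fan_moves c p [:: (b, a, z)])) => //; last first.
  by rewrite size_fan_moves sz.
apply: valid_fan_moves => //; first by rewrite set11.
- by rewrite sz.
- by rewrite disjoint_has; apply/hasPn => x /pL /linkN; rewrite inE.
rewrite /= !inE (negbTE (linkN _ bL)) (negbTE b_p) (negbTE ac) ba z_p (baz : [set b; a; z] \in F) orbT.
by rewrite andbT (contra (pL a) aL).
Qed.

Hypothesis verts_connected :
  forall x y, x \in verts F -> y \in verts F -> connect (adj F) x y.

Lemma exists_star_exit c : c \in verts F -> ~~ (verts F \subset c |: link_verts F c) ->
  exists a b, [/\ b \in link_verts F c, a \notin c |: link_verts F c & a \in link_verts F b].
Proof.
move=> cV /subsetPn [w wV wS].
have [a [b [/andP [ab abE] aS bS]]] := connect_cross (verts_connected wV cV) wS (setU11 _ _).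
have bc : b != c.
  by apply: contraNneq aS => eb; rewrite in_setU1 inE -eb (negbTE ab) /= setUC abE.
move: bS; rewrite in_setU1 (negbTE bc) /= => bL.
by exists a, b; split; rewrite // inE ab setUC abE.
Qed.

Lemma win_link5 c : c \in verts F -> #|link_verts F c| = 5 ->
  6 < #|verts F| -> #|verts F| <= 8 -> #|F| <= 12 -> has_winning_strategy F.
Proof.
move=> cV d5 v6 v8 le_F; set S := c |: link_verts F c.
have cardS : #|S| = 6 by rewrite cardsU1 d5 inE eqxx.
have exit : ~~ (verts F \subset S).
  by apply/negP => /subset_leq_card; rewrite cardS; lia.
have [a [b [bL aS aLb]]] := exists_star_exit cV exit; rewrite -/S in aS.
have /eqP/cards2P [y [y' [yy' Nba]]] := card_link_nbrs aLb.
have apex u : u \in [set y; y'] -> link_rel F b a u by rewrite -Nba inE.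
have [bay bay'] := (apex y (set21 _ _), apex y' (set22 _ _)).
have [yL | yL] := boolP (y \in link_verts F c); first exact: win_link5_apex bay yL le_F.
have [y'L | y'L] := boolP (y' \in link_verts F c); first exact: win_link5_apex bay' y'L le_F.
have apex_out u : link_rel F b a u -> u \notin link_verts F c -> u \notin S.
  move=> bau uL; rewrite in_setU1 (negbTE uL) orbF; apply: contraNneq aS => uc.
  have cab : link_rel F c a b by rewrite /link_rel set3_rot set3C12 -uc.
  by rewrite /S in_setU1 (link_rel_link cab) orbT.
have SV : S \subset verts F.
  apply/subsetP => x; rewrite in_setU1 => /predU1P [-> //|].
  by rewrite inE => /andP [_ /edge_verts /subsetP]; apply; rewrite !inE eqxx orbT.
have [[_ ay _] [_ ay' _]] := (tri_neq bay, tri_neq bay'); clearbody S.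
have [[_ aV yV] [_ _ y'V]] := (tri_verts bay, tri_verts bay').
have : #|a |: (y |: (y' |: S))| <= #|verts F|.
  by apply: subset_leq_card; rewrite !subUset !sub1set aV yV y'V SV.
rewrite !cardsU1 cardS !in_setU1 (negbTE yy') (negbTE ay) (negbTE ay') (negbTE aS).
rewrite (negbTE (apex_out _ bay yL)) (negbTE (apex_out _ bay' y'L)) /=.
by move=> /leq_trans/(_ v8).
Qed.

End Surface.

Theorem mainTheorem3 (T : finType) (F : {set {set T}}) :
  is_sphere2 F -> #|F| <= 12 -> has_winning_strategy F.
Proof.
case=> card_tri card_edge_tri link_connected verts_connected euler le_F.
have faces_edges := three_faces_two_edges card_tri card_edge_tri.
have faces_verts : #|F| + 4 = 2 * #|verts F| by lia.
have [x /bigcupP [t tF _]] : exists x, x \in verts F by apply/card_gt0P; lia.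
have [v4 | v4] := leqP #|verts F| 4.
  by apply: win_one_triangle tF _ => //; lia.
have [v6 | v6] := leqP #|verts F| 6.
  have [c cV d4] := @exists_deg_gt _ F 3 ltac:(lia).
  by apply: (win_fan card_tri card_edge_tri link_connected cV (k := 2)); lia.
have [c cV d5] := @exists_deg_gt _ F 4 ltac:(lia).
have [d6 | d5'] := leqP 6 #|link_verts F c|.
  by apply: (win_fan card_tri card_edge_tri link_connected cV (k := 3)); lia.
by apply: (win_link5 card_tri card_edge_tri link_connected verts_connected cV); lia.
Qed.
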